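(* Let $m\geq 1$ and let $n,r$ be integers with $r\geq n\geq 5$ and $r\geq 10$, and let $\alpha$ be an integer with $1\leq\alpha<(m+1)^n$. Then $\Gamma_n^{\alpha,r}$ is homotopy equivalent to the induced subcomplex of $\Gamma_n^{\alpha,r}$ on the set of vertices $x$ satisfying: (i) $|x_i|<\lfloor r/2\rfloor$ and $|x_j|+|x_k|\leq\lceil r/2\rceil$ for all $i,j,k\in[n]$ with $j\neq k$; and (ii) there is no four-element set $\{i,j,k,l\}\subseteq[n]$ such that $|x_i|+|x_j|+|x_k|+|x_l|\geq r-1$ and $x_s=0$ for all $s\notin\{i,j,k,l\}$.
   Context: $[n]=\{1,\ldots,n\}$. $\mathbb{Z}^n$ carries the Manhattan metric $d(x,y)=\sum_i|x_i-y_i|$; for $X\subseteq\mathbb{Z}^n$, $\mathrm{VR}(X;r)$ is the simplicial complex on $X$ whose simplices are finite subsets of diameter at most $r$. Let $\prec$ be the anti-lexicographic order on $\mathbb{Z}^n$: $x\prec y$ iff at the largest index $i$ with $x_i\neq y_i$ one has $x_i<y_i$. Let $V_m=\{0,\ldots,m\}^n$. Let $H$ be $V_m$ with its first $\alpha$ elements (with respect to $\prec$) removed, $\delta$ the $\prec$-least element of $H$, and $Y=\{x-\delta: x\in H\}$ (so $\mathbf{0}$ is the least element of $Y$). Then $\Gamma_n^{\alpha,r}$ is the link of $\mathbf{0}$ in $\mathrm{VR}(Y;r)$, i.e. the complex of simplices $\tau$ of $\mathrm{VR}(Y;r)$ with $\mathbf{0}\notin\tau$ and $\tau\cup\{\mathbf{0}\}\in\mathrm{VR}(Y;r)$.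 The induced subcomplex of $K$ on a vertex set $W$ consists of the simplices of $K$ contained in $W$. *)

From mathcomp Require Import all_boot all_order all_algebra.
From mathcomp Require Import all_classical all_reals all_analysis.
Import numFieldNormedType.Exports.
Import Order.TTheory GRing.Theory Num.Theory.


Local Open Scope classical_set_scope.
Local Open Scope ring_scope.

(* A scomplex on a vertex type V is given by its predicate of simplices, *)
(* a simplex being a finite set of vertices represented by a list.      *)

Definition scomplex (V : choiceType) := seq V -> Prop.

Definition induced_sub (V : choiceType) (K : scomplex V) (W : V -> Prop) : scomplex V :=
  fun s => K s /\ (forall v, v \in s -> W v).

(* Geometric realization |K|, as a subspace of R^V with the product
   (pointwise) topology: the points are the barycentric-coordinate
   functions t >= 0 supported on a simplex of K with sum 1. *)
Arguments induced_sub {V} K W.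

Definition geom_realization (R : realType) (V : choiceType) (K : scomplex V)
  : set {ptws V -> R} :=
  [set t | exists s : seq V, [/\ K s,
      (forall v, v \notin s -> t v = 0),
      (forall v, 0 <= t v) &
      \sum_(v <- undup s) t v = 1]].

Arguments geom_realization R {V} K.

Definition homotopy_between (R : realType) (T U : topologicalType)
  (A : set T) (B : set U) (f g : T -> U) : Prop :=
  exists H : (R * T)%type -> U,
    [/\ {within `[0%R, 1%R] `*` A, continuous H},
        (forall p, (`[0%R, 1%R] `*` A) p -> B (H p)),
        (forall x, A x -> H (0%R, x) = f x) &
        (forall x, A x -> H (1%R, x) = g x)].

Arguments homotopy_between R {T U} A B f g.

Definition homotopy_equivalent (R : realType) (T U : topologicalType)
  (A : set T) (B : set U) : Prop :=
  exists (f : T -> U) (g : U -> T),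
    [/\ {within A, continuous f}, (forall x, A x -> B (f x)),
        {within B, continuous g} & (forall y, B y -> A (g y))] /\
    homotopy_between R A A (g \o f) id /\
    homotopy_between R B B (f \o g) id.

Arguments homotopy_equivalent R {T U} A B.

Definition pt (n : nat) := {ffun 'I_n -> int}.

Definition manhattan (n : nat) (x y : pt n) : int := \sum_(i < n) `|x i - y i|.

Arguments manhattan {n} x y.

Definition VR (n : nat) (X : seq (pt n)) (r : nat) : scomplex (pt n) :=
  fun s => (forall x, x \in s -> x \in X) /\
           (forall x y, x \in s -> y \in s -> manhattan x y <= r%:Z).

Arguments VR {n} X r.

Definition antilex (n : nat) (x y : pt n) : bool :=
  [exists i : 'I_n, (x i < y i) && [forall j : 'I_n, (i < j)%N ==> (x j == y j)]].

Arguments antilex {n} x y.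

Definition Vm (m n : nat) : seq (pt n) :=
  [seq [ffun i => ((f i : nat)%:Z)] | f : {ffun 'I_n -> 'I_m.+1}].

(* H = V_m with its first alpha elements (w.r.t. antilex) removed, i.e. the
   elements having at least alpha antilex-predecessors in V_m. *)
Definition Hset (m n alpha : nat) : seq (pt n) :=
  [seq x <- Vm m n | (alpha <= count (fun y => antilex y x) (Vm m n))%N].

Definition delta (m n alpha : nat) : pt n :=
  head [ffun => 0]
    [seq x <- Hset m n alpha | all (fun y => ~~ antilex y x) (Hset m n alpha)].

Definition Yset (m n alpha : nat) : seq (pt n) :=
  [seq [ffun i => x i - delta m n alpha i] | x : pt n <- Hset m n alpha].

Definition origin (n : nat) : pt n := [ffun => 0].

(* Gamma_n^{alpha,r} = link of 0 in VR(Y; r). *)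
Definition Gamma (m n alpha r : nat) : scomplex (pt n) :=
  fun s => VR (Yset m n alpha) r s /\ origin n \notin s /\
           VR (Yset m n alpha) r (origin n :: s).

Definition good_vertex (n r : nat) (x : pt n) : Prop :=
  [/\ (forall i : 'I_n, `|x i| < (r %/ 2)%N%:Z),
      (forall j k : 'I_n, j != k -> `|x j| + `|x k| <= ((r + 1) %/ 2)%N%:Z) &
      ~ (exists i j k l : 'I_n,
           [/\ uniq [:: i; j; k; l],
               `|x i| + `|x j| + `|x k| + `|x l| >= r%:Z - 1 &
               forall s : 'I_n, s \notin [:: i; j; k; l] -> x s = 0])].

From mathcomp Require Import all_boot all_order all_algebra.
From mathcomp Require Import all_classical all_reals all_analysis.
From mathcomp Require Import zify ring lra.
Import numFieldNormedType.Exports.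
Import Order.TTheory GRing.Theory Num.Theory.

(* [Gamma] is the flag complex on the points [y] of [Y] with [0 < |y|_1 <= r].
   Say that [w] dominates [y] if every vertex adjacent to [y] is adjacent to
   [w].  If [psi y] dominates [y] for every vertex [y], then [s ++ map psi s]
   is a simplex for every simplex [s], so a straight-line homotopy joins the
   identity of [|Gamma|] to the map induced by [psi].

   A vertex that is not good is dominated by a vertex of smaller
   norm, obtained by moving one, two or four of its coordinates one step
   toward [0] (which stays in [Y]).  For a neighbour [z], a moved coordinate
   gets farther from [z_i] only if [y_i] lies between [0] and [z_i]; as
   [|z|_1 <= r] and [d(z, y) <= r], this is harmless when the moved
   coordinates carry a large enough part of [|y|_1], which is what the failure
   of goodness provides.  The one exception is [r] odd with a single
   coordinate [±⌊r/2⌋], all others in [{-1, 0, 1}] and [|y|_1 = r].  Iterating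
   reaches a good or such an exceptional vertex; a second map then moves the
   exceptional vertices to good ones.  It dominates only among good and
   exceptional vertices, where the parity of [d(z, y) + |z|_1 + |y|_1]
   excludes the bad case; this suffices because the first map lands there. *)

Local Open Scope classical_set_scope.
Local Open Scope ring_scope.

(** * Retractions of geometric realizations *)

Section Barycentric.
Context {R : realType} {V : choiceType}.
Implicit Types (s X : seq V) (t : V -> R) (phi : V -> V).

Definition barycentric s t :=
  [/\ forall v, v \notin s -> t v = 0, forall v, 0 <= t v &
      \sum_(v <- undup s) t v = 1].

Lemma geom_realizationP (K : scomplex V) t :
  geom_realization R K t <-> exists2 s, K s & barycentric s t.
Proof. by split=> [[s [Ks ? ? ?]]|[s Ks [? ? ?]]]; exists s. Qed.

Lemma sum_support_eq X1 X2 t : uniq X1 -> uniq X2 ->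
  (forall v, t v != 0 -> v \in X1) -> (forall v, t v != 0 -> v \in X2) ->
  \sum_(v <- X1) t v = \sum_(v <- X2) t v.
Proof.
move=> uX1 uX2 supp1 supp2.
have restrict (Y Z : seq V) : (forall v, t v != 0 -> v \in Z) ->
    \sum_(v <- Y) t v = \sum_(v <- Y | v \in Z) t v.
  move=> suppZ; rewrite [RHS]big_mkcond; apply: eq_bigr => v _.
  by case: ifP => // /negbT vZ; apply/eqP; apply: contraNT vZ; exact: suppZ.
rewrite (restrict _ _ supp2) (restrict X2 _ supp1) -big_filter -[RHS]big_filter.
apply/perm_big/uniq_perm; rewrite ?filter_uniq // => v.
by rewrite !mem_filter andbC.
Qed.

Lemma barycentric_sum s t X : barycentric s t -> uniq X -> {subset s <= X} ->
  \sum_(v <- X) t v = 1.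
Proof.
move=> [t0 _ t1] uX sX; rewrite -t1; apply: sum_support_eq => // [|v|v].
- exact: undup_uniq.
- by apply: contraNT => vX; rewrite t0 //; apply: contra vX; exact: sX.
- by apply: contraNT; rewrite mem_undup => vs; rewrite t0.
Qed.
Arguments barycentric_sum {s t X}.

Lemma barycentric_convex s1 s2 t1 t2 (a b : R) :
  barycentric s1 t1 -> barycentric s2 t2 -> 0 <= a -> 0 <= b -> a + b = 1 ->
  barycentric (s1 ++ s2) (fun v => a * t1 v + b * t2 v).
Proof.
move=> h1 h2 a0 b0 ab; case: (h1) => t10 t1ge0 _; case: (h2) => t20 t2ge0 _.
split=> [v|v|].
- by rewrite mem_cat negb_or => /andP[v1 v2]; rewrite t10 // t20 // !mulr0 addr0.
- by rewrite addr_ge0 // mulr_ge0.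
rewrite big_split /= -!mulr_sumr.
rewrite (barycentric_sum h1 (undup_uniq _)); last first.
  by move=> v; rewrite mem_undup mem_cat => ->.
rewrite (barycentric_sum h2 (undup_uniq _)); last first.
  by move=> v; rewrite mem_undup mem_cat orbC => ->.
by rewrite !mulr1.
Qed.

(* The affine extension of the vertex map [phi]; [X] must contain the support
   of [t]. *)
Definition realize_map X phi t : V -> R :=
  fun u => \sum_(v <- X | phi v == u) t v.

Lemma barycentric_realize_map X phi s t : uniq X -> {subset s <= X} ->
  barycentric s t -> barycentric (map phi s) (realize_map X phi t).
Proof.
move=> uX sX bst; case: (bst) => t0 tge0 _; split=> [u us|u|].
- rewrite /realize_map big1 // => v /eqP phiv; apply: t0.
  by apply: contra us => vs; rewrite -phiv map_f.
- by rewrite /realize_map sumr_ge0.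
rewrite /realize_map (exchange_big_dep predT) //=.
have fiber v : \sum_(u <- undup (map phi s) | phi v == u) t v =
    if phi v \in map phi s then t v else 0.
  rewrite big_const_seq (@eq_count _ _ (pred1 (phi v))); last first.
    by move=> u; rewrite /= eq_sym.
  rewrite count_uniq_mem ?undup_uniq // mem_undup.
  by case: (_ \in _); rewrite /= ?addr0.
under eq_bigr do rewrite fiber.
rewrite -(barycentric_sum bst uX sX); apply: eq_bigr => v _.
by case: ifP => // /negbT phivs; rewrite t0 //; apply: contra phivs => /map_f.
Qed.

Lemma cvg_ptws_coord (F : set_system {ptws V -> R}) {FF : Filter F} (f : V -> R) :
  (forall v, (fun g : V -> R => g v) @ F --> f v) -> {ptws, F --> f}.
Proof.
move=> Fv; rewrite cvg_sup => v.
rewrite cvg_image; last by rewrite eqEsubset; split=> x // _; exists (cst x).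
move=> U /= /(Fv v) FU; exists ((@^~ v) @^-1` U) => //.
by rewrite eqEsubset; split => [x [? + <-//]|x Ux]; exists (fun _ => x).
Qed.

Lemma cvg_realize_map {T : Type} (F : set_system T) {FF : Filter F} X phi
    (h : T -> V -> R) t u :
  (forall v, (fun x => h x v) @ F --> t v) ->
  (fun x => realize_map X phi (h x) u) @ F --> realize_map X phi t u.
Proof.
move=> ht; rewrite /realize_map; elim: X => [|x X IH].
  under eq_fun do rewrite big_nil; rewrite big_nil; exact: cvg_cst.
under eq_fun do rewrite big_cons; rewrite big_cons.
by case: (phi x == u) => //; apply: cvgD.
Qed.

Lemma continuous_realize_map X phi :
  continuous (realize_map X phi : {ptws V -> R} -> {ptws V -> R}).
Proof.
move=> t; apply: (@cvg_ptws_coord (realize_map X phi @ nbhs t) _ (realize_map X phi t)).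
move=> u.
apply: (cvg_realize_map (nbhs t) X phi (fun g => g) t u) => v.
exact: (@proj_continuous V (fun=> R) v t).
Qed.

End Barycentric.
Arguments barycentric_realize_map {R V X} phi {s t}.

Section TwoStepRetraction.
Variables (R : realType) (V : choiceType) (K : scomplex V) (X : seq V).
Variables (W : V -> Prop) (phi1 phi2 : V -> V).
Hypothesis X_uniq : uniq X.
Hypothesis K_sub_X : forall s, K s -> {subset s <= X}.
Hypothesis K_hereditary : forall s s' : seq V, K s -> {subset s' <= s} -> K s'.
Hypothesis K_phi1 : forall s, K s -> K (s ++ map phi1 s).
Hypothesis K_phi2 : forall s, K s -> K (map phi1 s ++ map phi2 (map phi1 s)).
Hypothesis phi_W : forall s, K s -> forall v, v \in s -> W (phi2 (phi1 v)).
Hypothesis phi_id : forall s, K s -> forall v, v \in s -> W v -> phi2 (phi1 v) = v.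

Let retraction : {ptws V -> R} -> {ptws V -> R} := realize_map X (phi2 \o phi1).
Let midpoint : {ptws V -> R} -> {ptws V -> R} := realize_map X phi1.

(* The homotopy runs linearly from [retraction t] (time 0) to [midpoint t]
   (time 1/2) and on to [t] (time 1); each half stays in one simplex. *)
Let weight_end (l : R) := Num.max (2 * l - 1) 0.
Let weight_start (l : R) := Num.max (1 - 2 * l) 0.
Let weight_mid (l : R) := 1 - weight_end l - weight_start l.
Let homotopy (p : R * {ptws V -> R}) : {ptws V -> R} := fun u =>
  weight_end p.1 * p.2 u + weight_mid p.1 * midpoint p.2 u +
  weight_start p.1 * retraction p.2 u.

Lemma retraction_realization t : geom_realization R K t ->
  geom_realization R (induced_sub K W) (retraction t).
Proof.
move=> /geom_realizationP[s Ks bst]; apply/geom_realizationP.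
exists (map (phi2 \o phi1) s); last first.
  exact: barycentric_realize_map _ X_uniq (K_sub_X _ Ks) bst.
split; last by move=> _ /mapP[v vs ->]; exact: phi_W _ Ks v vs.
by apply: (K_hereditary _ _ (K_phi2 _ Ks)) => v; rewrite map_comp mem_cat orbC => ->.
Qed.

Lemma retraction_id t : geom_realization R (induced_sub K W) t -> retraction t = t.
Proof.
move=> /geom_realizationP[s [Ks sW] [t0 _ _]]; apply: funext => u.
rewrite /retraction /realize_map.
have -> : \sum_(v <- X | (phi2 \o phi1) v == u) t v = \sum_(v <- X | v == u) t u.
  rewrite big_mkcond [RHS]big_mkcond; apply: eq_bigr => v _ /=.
  have [vs|vs] := boolP (v \in s).
    by rewrite (phi_id _ Ks _ vs (sW _ vs)); case: (v =P u) => [->|].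
  by rewrite t0 // if_same; case: (v =P u) => // vu; rewrite -vu t0.
rewrite big_const_seq (@eq_count _ _ (pred1 u)) // count_uniq_mem //.
have [uX|uX] := boolP (u \in X); first by rewrite /= addr0.
by rewrite /= t0 //; apply: contra uX; exact: K_sub_X.
Qed.

Lemma continuous_weights :
  [/\ continuous weight_end, continuous weight_mid & continuous weight_start].
Proof.
have ce : continuous weight_end.
  have -> : weight_end = (fun l : R^o => 2 * l - 1) \max (fun=> 0) by [].
  move=> l; apply: continuous_max; last exact: cvg_cst.
  by apply: cvgB; [apply: cvgM; [exact: cvg_cst | exact: cvg_id] | exact: cvg_cst].
have cs : continuous weight_start.
  have -> : weight_start = (fun l : R^o => 1 - 2 * l) \max (fun=> 0) by [].
  move=> l; apply: continuous_max; last exact: cvg_cst.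
  by apply: cvgB; [exact: cvg_cst | apply: cvgM; [exact: cvg_cst | exact: cvg_id]].
by split=> // l; apply: cvgB; [apply: cvgB; [exact: cvg_cst | exact: ce] | exact: cs].
Qed.

Lemma continuous_homotopy : continuous homotopy.
Proof.
move=> p; apply: (@cvg_ptws_coord _ _ (homotopy @ nbhs p) _ (homotopy p)) => u.
have [ce cm cs] := continuous_weights.
have time g : continuous g ->
    (fun q : R * {ptws V -> R} => g q.1) @ nbhs p --> g p.1.
  move=> cg; exact: cvg_comp (@cvg_fst _ _ (nbhs p.1) (nbhs p.2) _) (cg p.1).
have coord v : (fun q : R * {ptws V -> R} => q.2 v) @ nbhs p --> p.2 v.
  exact: cvg_comp (@cvg_snd _ _ (nbhs p.1) (nbhs p.2) _)
                  (@proj_continuous V (fun=> R) v p.2).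
have push phi : (fun q : R * {ptws V -> R} => realize_map X phi q.2 u) @ nbhs p -->
    realize_map X phi p.2 u.
  exact: (cvg_realize_map (nbhs p) X phi (fun q : R * {ptws V -> R} => q.2) _ _ coord).
apply: cvgD; [apply: cvgD|]; apply: cvgM;
  by [exact: time | exact: coord | exact: push].
Qed.

Lemma homotopy_realization p : p.1 \in `[0, 1] -> geom_realization R K p.2 ->
  geom_realization R K (homotopy p).
Proof.
case: p => l t /=; rewrite in_itv /= => /andP[l0 l1].
move=> /geom_realizationP[s Ks bst]; apply/geom_realizationP.
have b1 := barycentric_realize_map phi1 X_uniq (K_sub_X _ Ks) bst.
have b21 := barycentric_realize_map (phi2 \o phi1) X_uniq (K_sub_X _ Ks) bst.
have [hl|hl] := lerP (2 * l) 1.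
  have we : weight_end l = 0 by apply/max_idPr; lra.
  have ws : weight_start l = 1 - 2 * l by apply/max_idPl; lra.
  exists (map phi1 s ++ map (phi2 \o phi1) s); first by rewrite map_comp; exact: K_phi2.
  have -> : homotopy (l, t) =
      (fun v => 2 * l * midpoint t v + (1 - 2 * l) * retraction t v).
    by apply: funext => v; rewrite /homotopy /weight_mid /= we ws; ring.
  by apply: barycentric_convex => //; lra.
have we : weight_end l = 2 * l - 1 by apply/max_idPl; lra.
have ws : weight_start l = 0 by apply/max_idPr; lra.
exists (s ++ map phi1 s); first exact: K_phi1.
have -> : homotopy (l, t) = (fun v => (2 * l - 1) * t v + (2 - 2 * l) * midpoint t v).
  by apply: funext => v; rewrite /homotopy /weight_mid /= we ws; ring.
by apply: barycentric_convex => //; lra.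
Qed.

Theorem homotopy_equivalent_two_step_retraction :
  homotopy_equivalent R (geom_realization R K) (geom_realization R (induced_sub K W)).
Proof.
exists retraction, id; split; [split|split].
- exact/continuous_subspaceT/continuous_realize_map.
- exact: retraction_realization.
- by apply: continuous_subspaceT => x; exact: cvg_id.
- by move=> t /geom_realizationP[s [Ks _] bst]; apply/geom_realizationP; exists s.
- exists homotopy; split.
  + exact/continuous_subspaceT/continuous_homotopy.
  + by move=> p [p1 p2]; exact: homotopy_realization.
  + have e0 : weight_end 0 = 0 by apply/max_idPr; lra.
    have s0 : weight_start 0 = 1 - 2 * 0 by apply/max_idPl; lra.
    by move=> t _; apply: funext => v; rewrite /homotopy /weight_mid /= e0 s0; ring.
  + have e1 : weight_end 1 = 2 * 1 - 1 by apply/max_idPl; lra.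
    have s1 : weight_start 1 = 0 by apply/max_idPr; lra.
    by move=> t _; apply: funext => v; rewrite /homotopy /weight_mid /= e1 s1; ring.
- exists (fun p : R * {ptws V -> R} => p.2); split => //.
  + by apply: continuous_subspaceT => p; exact: (@cvg_snd _ _ (nbhs p.1) (nbhs p.2) _).
  + by move=> p [].
  + by move=> t Wt; rewrite /= retraction_id.
Qed.

End TwoStepRetraction.
Arguments homotopy_equivalent_two_step_retraction R {V K} X {W} phi1 phi2.

(** * The vertices of Gamma *)

Section Antilex.
Context {n : nat}.
Implicit Types x y z d : pt n.

Lemma antilexP x y :
  reflect (exists i, x i < y i /\ forall j : 'I_n, (i < j)%N -> x j = y j)
          (antilex x y).
Proof.
apply: (iffP existsP) => [[i /andP[xy /forallP above]]|[i [xy above]]].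
  by exists i; split => // j ij; move: (above j); rewrite ij => /eqP.
by exists i; rewrite xy; apply/forallP => j; apply/implyP => /above ->.
Qed.

Lemma antilex_irrefl x : ~~ antilex x x.
Proof. by apply/antilexP => -[i []]; rewrite ltxx. Qed.

Lemma antilex_trans y x z : antilex x y -> antilex y z -> antilex x z.
Proof.
move=> /antilexP[i [xy_i above_i]] /antilexP[j [yz_j above_j]]; apply/antilexP.
have [ij|ji|/val_inj eij] := ltngtP i j.
- exists j; split=> [|k jk]; first by rewrite above_i.
  by rewrite above_i ?above_j // (ltn_trans ij).
- exists i; split=> [|k ik]; first by rewrite -above_j.
  by rewrite above_i ?above_j // (ltn_trans ji).
- subst j; exists i; split=> [|k ik]; first exact: lt_trans yz_j.
  by rewrite above_i ?above_j.
Qed.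

Lemma antilex_total x y : x != y -> antilex x y || antilex y x.
Proof.
move=> nxy; have [i0 xy_i0] : exists i, x i != y i.
  apply/existsP; apply: contraNT nxy => /existsPn same; apply/eqP/ffunP => i.
  by apply/eqP; rewrite -[_ == _]negbK same.
have [i xy_i imax] := @arg_maxnP _ i0 (fun i => x i != y i) val xy_i0.
have above (j : 'I_n) : (i < j)%N -> x j = y j.
  by move=> ij; apply/eqP; apply: contraTT ij => /imax; rewrite -leqNgt.
case: (ltrgtP (x i) (y i)) xy_i => // lt_xy _.
  by rewrite (introT (antilexP _ _)) //; exists i.
by rewrite orbC (introT (antilexP _ _)) //; exists i; split=> // j /above ->.
Qed.

Lemma antilex_translate x y d :
  antilex [ffun i => x i + d i] [ffun i => y i + d i] = antilex x y.
Proof.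
apply/antilexP/antilexP => -[i [lt_i above]]; exists i; split.
- by move: lt_i; rewrite !ffunE ltrD2r.
- by move=> j /above; rewrite !ffunE => /addIr.
- by rewrite !ffunE ltrD2r.
- by move=> j /above; rewrite !ffunE => ->.
Qed.

Lemma translate_origin d : [ffun i => origin n i + d i] = d.
Proof. by apply/ffunP => i; rewrite !ffunE add0r. Qed.

Lemma exists_antilex_min (s : seq (pt n)) : s != [::] ->
  exists2 x, x \in s & forall y, y \in s -> ~~ antilex y x.
Proof.
elim: s => // a s IH _; have [->|/IH[b bs bmin]] := eqVneq s [::].
  by exists a; rewrite ?mem_head // => y; rewrite inE => /eqP ->; exact: antilex_irrefl.
have [ab|ba] := boolP (antilex a b).
  exists a; first exact: mem_head.
  move=> y; rewrite inE => /predU1P[->|ys]; first exact: antilex_irrefl.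
  by apply: contra (bmin y ys) => /antilex_trans; apply.
by exists b => [|y]; rewrite inE ?bs ?orbT // => /predU1P[->|/bmin].
Qed.

End Antilex.

Section Yset.
Variables m n alpha : nat.
Local Notation Y := (Yset m n alpha).
Local Notation H := (Hset m n alpha).
Local Notation d := (delta m n alpha).
Implicit Types x y w : pt n.

Lemma mem_Vm x : (x \in Vm m n) = [forall i, 0 <= x i <= m%:Z].
Proof.
apply/idP/forallP => [/mapP[f _ ->] i|box].
  by rewrite ffunE lez_nat -ltnS ltn_ord.
have lt_m i : (`|x i|%N < m.+1)%N.
  by move/andP: (box i) => [x0 xm]; rewrite ltnS -lez_nat gez0_abs.
apply/mapP; exists [ffun i => Ordinal (lt_m i)]; first by rewrite mem_enum.
by apply/ffunP => i; rewrite !ffunE /= gez0_abs //; case/andP: (box i).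
Qed.

Lemma delta_min : H != [::] -> d \in H /\ forall y, y \in H -> ~~ antilex y d.
Proof.
move=> /exists_antilex_min[x xH xmin].
set L := [seq x <- H | all (fun y => ~~ antilex y x) H].
have xL : x \in L by rewrite mem_filter xH andbT; apply/allP.
have : d \in L by rewrite /delta -/L; case: L xL => // a l _; exact: mem_head.
by rewrite mem_filter => /andP[/allP dmin dH]; split => // y /dmin.
Qed.

Lemma Yset_translate y : y \in Y -> H != [::] /\ [ffun i => y i + d i] \in H.
Proof.
move=> /mapP[x xH ->]; split; first by case: (H) xH.
suff -> : [ffun i => [ffun i => x i - d i] i + d i] = x by [].
by apply/ffunP => i; rewrite !ffunE subrK.
Qed.

Lemma Yset_pos y : y \in Y -> y = origin n \/ antilex (origin n) y.
Proof.
move=> /Yset_translate[/delta_min[_ dmin] yH].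
have [e|ne] := eqVneq [ffun i => y i + d i] d.
  left; apply/ffunP => i; move/ffunP/(_ i): e; rewrite !ffunE.
  by move/(canRL (addrK _)); rewrite subrr.
right; move: (antilex_total _ _ ne) (dmin _ yH) => /orP[-> //|dy _].
by rewrite -(antilex_translate _ _ d) translate_origin.
Qed.

Lemma Yset_shrink y w : y \in Y ->
  (forall i, (0 <= w i <= y i) || (y i <= w i <= 0)) ->
  antilex (origin n) w -> w \in Y.
Proof.
move=> yY between wpos; have [Hn yH] := Yset_translate _ yY.
have [dH dmin] := delta_min Hn.
have boxes i : 0 <= d i <= m%:Z /\ 0 <= y i + d i <= m%:Z.
  move: (yH) (dH); rewrite !mem_filter !mem_Vm => /andP[_ /forallP/(_ i)].
  by rewrite ffunE => ? /andP[_ /forallP/(_ i)].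
have wd : antilex d [ffun i => w i + d i].
  by rewrite -{1}(translate_origin d) antilex_translate.
have wH : [ffun i => w i + d i] \in H.
  rewrite mem_filter mem_Vm; apply/andP; split.
    move: dH; rewrite mem_filter => /andP[/leq_trans + _]; apply.
    by apply: sub_count => x /= /antilex_trans; apply.
  apply/forallP => i; rewrite ffunE; have [? ?] := boxes i.
  by have := between i; lia.
apply/mapP; exists [ffun i => w i + d i] => //.
by apply/ffunP => i; rewrite !ffunE addrK.
Qed.

End Yset.

Section Norm.
Context {n : nat}.
Implicit Types x y z : pt n.

Definition norm1 x : int := \sum_i `|x i|.

Lemma manhattan0x x : manhattan (origin n) x = norm1 x.
Proof. by apply: eq_bigr => i _; rewrite ffunE sub0r normrN. Qed.

Lemma manhattanC x y : manhattan x y = manhattan y x.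
Proof. by apply: eq_bigr => i _; rewrite distrC. Qed.

Lemma manhattanxx x : manhattan x x = 0.
Proof. by rewrite /manhattan big1 // => i _; rewrite subrr normr0. Qed.

Lemma norm1_ge0 x : 0 <= norm1 x.
Proof. exact: sumr_ge0. Qed.

(* [|t| + t] and [|t| - t] are even, and the three terms add up to
   [(|a - b| + (a - b)) + (|a| - a) + (|b| + b)]. *)
Lemma manhattan_parity z y :
  exists k : int, manhattan z y + norm1 z + norm1 y = 2 * k.
Proof.
rewrite /manhattan /norm1 -!big_split /=.
apply: (big_rec (fun s => exists k : int, s = 2 * k)); first by exists 0; rewrite mulr0.
move=> i _ _ [k ->]; set a := z i; set b := y i.
exists (Num.max (a - b) 0 + Num.max (- a) 0 + Num.max b 0 + k); lia.
Qed.

End Norm.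

Section Flag.
Variables m n alpha r : nat.
Local Notation Y := (Yset m n alpha).
Local Notation Gamma := (Gamma m n alpha r).
Implicit Types x y z w : pt n.

Definition Gamma_vertex x : bool := [&& x \in Y, x != origin n & norm1 x <= r%:Z].

Lemma GammaP s : Gamma s <->
  [/\ origin n \in Y, {in s, forall x, Gamma_vertex x} &
      {in s &, forall x y, manhattan x y <= r%:Z}].
Proof.
split=> [[[sY sr] [s0 [s0Y s0r]]]|[oY sv sr]].
  split=> [|x xs|]; first by apply: s0Y; exact: mem_head.
    rewrite /Gamma_vertex sY //= -manhattan0x s0r ?mem_head ?inE ?xs ?orbT //.
    by rewrite andbT; apply: contraNneq s0 => <-.
  exact: sr.
have r0x x : x \in s -> manhattan (origin n) x <= r%:Z.
  by move=> /sv /and3P[_ _]; rewrite manhattan0x.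
split; first by split=> [x /sv /and3P[]|].
split; first by apply/negP => /sv /and3P[_ /eqP].
split=> [x|x y]; first by rewrite inE => /predU1P[->|/sv /and3P[]].
rewrite !inE => /predU1P[->|xs] /predU1P[->|ys].
- by rewrite manhattanxx.
- exact: r0x.
- by rewrite manhattanC; exact: r0x.
- exact: sr.
Qed.

Lemma Gamma_sub s s' : Gamma s -> {subset s' <= s} -> Gamma s'.
Proof.
move=> /GammaP[oY sv sr] s's; apply/GammaP; split=> // [x /s's /sv //|x y /s's xs /s's].
exact: sr.
Qed.

Definition dominates (U : pt n -> Prop) w y :=
  forall z, Gamma_vertex z -> U z -> manhattan z y <= r%:Z -> manhattan z w <= r%:Z.

Lemma dominates_trans U w y x : dominates U w y -> dominates U y x -> dominates U w x.
Proof. by move=> wy yx z zv zU /(yx z zv zU); exact: wy. Qed.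

Lemma Gamma_cat_map (U : pt n -> Prop) (psi : pt n -> pt n) s :
  (forall y, Gamma_vertex y -> U y ->
     [/\ Gamma_vertex (psi y), U (psi y) & dominates U (psi y) y]) ->
  Gamma s -> {in s, forall x, U x} -> Gamma (s ++ map psi s).
Proof.
move=> psiP /GammaP[oY sv sr] sU.
have near_psi x y : x \in s -> y \in s -> manhattan x (psi y) <= r%:Z.
  move=> xs ys; have [_ _ dom] := psiP y (sv y ys) (sU y ys).
  by apply: dom; [exact: sv | exact: sU | exact: sr].
apply/GammaP; split=> // [x|x y].
  by rewrite mem_cat => /orP[/sv //|/mapP[y ys ->]]; case: (psiP y (sv y ys) (sU y ys)).
rewrite !mem_cat => /orP[xs|/mapP[x' xs ->]] /orP[ys|/mapP[y' ys ->]].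
- exact: sr.
- exact: near_psi.
- by rewrite manhattanC; exact: near_psi.
- have [vx Ux _] := psiP x' (sv x' xs) (sU x' xs).
  have [_ _ domy] := psiP y' (sv y' ys) (sU y' ys).
  by apply: domy => //; rewrite manhattanC; exact: near_psi.
Qed.

End Flag.
Arguments Gamma_sub {m n alpha r s s'}.
Arguments Gamma_cat_map {m n alpha r} U {psi s}.

(** * Shrinking moves *)

(* Moving a coordinate [y_i] one step toward [0] turns its distance [a] to
   [z_i] into [w]; the distance grows only if [y_i] lies between [0] and [z_i],
   i.e. [a + |y_i| = |z_i|]. *)
Definition shrink_step (w a b c : int) := w + 1 = a \/ (w = a + 1 /\ a + b = c).

Lemma shrink_step_toward0 (c b : int) : b != 0 ->
  shrink_step `|c - (b - Num.sg b)| `|c - b| `|b| `|c|.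
Proof.
rewrite /shrink_step.
by case: (ltrgtP b 0) => hb _ //; [rewrite ltr0_sg | rewrite gtr0_sg]; lia.
Qed.

Lemma abs_step_toward0 (b : int) : b != 0 -> `|b - Num.sg b| = `|b| - 1.
Proof. by case: (ltrgtP b 0) => hb _ //; [rewrite ltr0_sg | rewrite gtr0_sg]; lia. Qed.

Section Shrink.
Context {n : nat}.
Implicit Types (S : seq 'I_n) (x y z : pt n).

Definition shrink S y : pt n :=
  [ffun i => if i \in S then y i - Num.sg (y i) else y i].

Lemma shrink_in S y i : i \in S -> shrink S y i = y i - Num.sg (y i).
Proof. by move=> iS; rewrite ffunE iS. Qed.

Lemma shrink_out S y i : i \notin S -> shrink S y i = y i.
Proof. by move=> iS; rewrite ffunE (negbTE iS). Qed.

Lemma big_split_seq (F : 'I_n -> int) S : uniq S ->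
  \sum_i F i = \sum_(i <- S) F i + \sum_(i | i \notin S) F i.
Proof. by move=> uS; rewrite (bigID (mem S)) /= big_uniq. Qed.

Lemma shrink_decomp S z y : uniq S ->
  [/\ manhattan z y = \sum_(i <- S) `|z i - y i| + \sum_(i | i \notin S) `|z i - y i|,
      manhattan z (shrink S y) =
        \sum_(i <- S) `|z i - shrink S y i| + \sum_(i | i \notin S) `|z i - y i|,
      norm1 z = \sum_(i <- S) `|z i| + \sum_(i | i \notin S) `|z i|,
      norm1 y = \sum_(i <- S) `|y i| + \sum_(i | i \notin S) `|y i| &
      \sum_(i | i \notin S) `|z i - y i| <=
        \sum_(i | i \notin S) `|z i| + \sum_(i | i \notin S) `|y i|].
Proof.
move=> uS; rewrite /manhattan /norm1 !(big_split_seq _ _ uS); split=> //.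
- by congr (_ + _); apply: eq_bigr => i iS; rewrite shrink_out.
- by rewrite -big_split /=; apply: ler_sum => i _; exact: ler_normB.
Qed.

Lemma norm1_shrink_lt S y : S != [::] -> {in S, forall i, y i != 0} ->
  norm1 (shrink S y) < norm1 y.
Proof.
case: S => // i0 S _ nz; rewrite /norm1 (bigD1 i0) //= [ltRHS](bigD1 i0) //=.
apply: ltr_leD.
  by rewrite shrink_in ?mem_head // abs_step_toward0 ?nz ?mem_head //; lia.
apply: ler_sum => i _.
have [iS|iS] := boolP (i \in i0 :: S); last by rewrite shrink_out.
rewrite shrink_in //; have [->|yi] := eqVneq (y i) 0; first by rewrite sgr0 subr0.
by rewrite abs_step_toward0 //; lia.
Qed.

Lemma antilex_shrink S y : antilex (origin n) y ->
  {in S, forall i : 'I_n, (forall j : 'I_n, (i < j)%N -> y j = 0) -> 2 <= `|y i|} ->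
  antilex (origin n) (shrink S y).
Proof.
move=> /antilexP[l [yl_pos above]] big_leading; apply/antilexP; exists l.
rewrite ffunE in yl_pos.
have zero_above (j : 'I_n) : (l < j)%N -> y j = 0 by move=> lj; rewrite -above // ffunE.
split=> [|j lj]; rewrite !ffunE; last by case: ifP; rewrite zero_above ?sgr0 ?subr0.
case: ifP => // lS; have := big_leading l lS zero_above.
by rewrite gtr0_sg //; lia.
Qed.

End Shrink.

Section ShrinkMoves.
Variables m n alpha r : nat.
Local Notation vertex := (Gamma_vertex m n alpha r).
Implicit Types (S : seq 'I_n) (y z : pt n).

Lemma shrink_vertex S y : vertex y -> S != [::] -> {in S, forall i, y i != 0} ->
  {in S, forall i : 'I_n, (forall j : 'I_n, (i < j)%N -> y j = 0) -> 2 <= `|y i|} ->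
  vertex (shrink S y) /\ norm1 (shrink S y) < norm1 y.
Proof.
move=> /and3P[yY y0 yr] S0 nz big_leading; have lt_norm := norm1_shrink_lt _ _ S0 nz.
have ypos : antilex (origin n) y.
  by case: (Yset_pos _ _ _ _ yY) => // y_0; rewrite y_0 eqxx in y0.
have wpos := antilex_shrink _ _ ypos big_leading.
split=> //; apply/and3P; split.
- apply: (Yset_shrink _ _ _ _ _ yY _ wpos) => i; rewrite ffunE.
  case: ifP => _; last lia.
  case: (ltrgtP (y i) 0) => [yi|yi|->]; last by rewrite sgr0; lia.
  + by rewrite ltr0_sg //; lia.
  + by rewrite gtr0_sg //; lia.
- by apply: contraTneq wpos => ->; exact: antilex_irrefl.
- exact: le_trans (ltW lt_norm) yr.
Qed.

End ShrinkMoves.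
Arguments shrink_vertex {m n alpha r S y}.

Lemma shrink4_arith {r A B wi wj wk wl ai aj ak al bi bj bk bl ci cj ck cl : int} :
  shrink_step wi ai bi ci -> shrink_step wj aj bj cj ->
  shrink_step wk ak bk ck -> shrink_step wl al bl cl ->
  ai + aj + ak + al + A <= r -> ci + cj + ck + cl + B <= r -> A <= B ->
  ai <= ci + bi -> aj <= cj + bj -> ak <= ck + bk -> al <= cl + bl ->
  4 <= bi + bj + bk + bl ->
  2 * bi <= bi + bj + bk + bl - 2 -> 2 * bj <= bi + bj + bk + bl - 2 ->
  2 * bk <= bi + bj + bk + bl - 2 -> 2 * bl <= bi + bj + bk + bl - 2 ->
  wi + wj + wk + wl + A <= r.
Proof. rewrite /shrink_step; lia. Qed.

Section DistanceBounds.
Variables (n : nat) (r : int) (z y : pt n).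
Hypothesis z_r : norm1 z <= r.
Hypothesis zy_r : manhattan z y <= r.

Lemma manhattan_shrink1 p : y p != 0 -> norm1 y + 1 <= 2 * `|y p| ->
  manhattan z (shrink [:: p] y) <= r.
Proof.
move=> yp big_p; have [eD eDS eZ eY offS] := shrink_decomp _ z y (erefl : uniq [:: p]).
move: zy_r z_r big_p; rewrite eDS eD eZ eY !big_seq1 shrink_in ?mem_head //.
have := shrink_step_toward0 (z p) _ yp; rewrite /shrink_step; lia.
Qed.

Lemma manhattan_shrink2 p q : p != q -> y p != 0 -> y q != 0 ->
  norm1 y + 2 <= 2 * (`|y p| + `|y q|) -> manhattan z (shrink [:: p; q] y) <= r.
Proof.
move=> pq yp yq big_pq; have upq : uniq [:: p; q] by rewrite /= inE pq.
have [eD eDS eZ eY offS] := shrink_decomp _ z y upq.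
move: zy_r z_r big_pq; rewrite eDS eD eZ eY !big_cons !big_nil !addr0.
rewrite !shrink_in ?inE ?eqxx ?orbT //.
have := shrink_step_toward0 (z p) _ yp; have := shrink_step_toward0 (z q) _ yq.
rewrite /shrink_step; lia.
Qed.

Lemma manhattan_shrink4 i j k l : uniq [:: i; j; k; l] ->
  y i != 0 -> y j != 0 -> y k != 0 -> y l != 0 ->
  (forall s, s \notin [:: i; j; k; l] -> y s = 0) -> 4 <= norm1 y ->
  2 * `|y i| <= norm1 y - 2 -> 2 * `|y j| <= norm1 y - 2 ->
  2 * `|y k| <= norm1 y - 2 -> 2 * `|y l| <= norm1 y - 2 ->
  manhattan z (shrink [:: i; j; k; l] y) <= r.
Proof.
move=> u yi yj yk yl y0 big4 smi smj smk sml.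
have [eD eDS eZ eY offS] := shrink_decomp _ z y u.
have off0 : \sum_(s | s \notin [:: i; j; k; l]) `|y s| = 0.
  by rewrite big1 // => s /y0 ->; rewrite normr0.
move: zy_r z_r big4 smi smj smk sml offS.
rewrite eDS eD eZ eY off0 !big_cons !big_nil !addr0 !shrink_in ?inE ?eqxx ?orbT //.
rewrite !addrA => old_r norm_z ? ? ? ? ? off_le.
apply: (shrink4_arith (shrink_step_toward0 _ _ yi) (shrink_step_toward0 _ _ yj)
  (shrink_step_toward0 _ _ yk) (shrink_step_toward0 _ _ yl) old_r norm_z off_le) => //.
all: exact: ler_normB.
Qed.

Lemma manhattan_shrink_far p : y p != 0 ->
  (`|y p| <= `|z p| -> manhattan z y < r) -> manhattan z (shrink [:: p] y) <= r.
Proof.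
move=> yp far; have [eD eDS _ _ _] := shrink_decomp _ z y (erefl : uniq [:: p]).
move: zy_r far; rewrite eDS eD !big_seq1 shrink_in ?mem_head //.
have := shrink_step_toward0 (z p) _ yp; rewrite /shrink_step; lia.
Qed.

End DistanceBounds.
Arguments manhattan_shrink1 {n r z y}.
Arguments manhattan_shrink2 {n r z y}.
Arguments manhattan_shrink4 {n r z y}.
Arguments manhattan_shrink_far {n r z y}.

(** * Reduction to good vertices *)

Definition big_pair (a b N : int) := 2 <= a /\ 2 <= b /\ N + 2 <= 2 * (a + b).

Definition balanced_quad (a b c d : int) :=
  let N := a + b + c + d in
  2 <= a /\ 2 <= b /\ 2 <= c /\ 2 <= d /\ 4 <= N /\
  2 * a <= N - 2 /\ 2 * b <= N - 2 /\ 2 * c <= N - 2 /\ 2 * d <= N - 2.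

Lemma four_coords_arith {a b c d h c' r : int} :
  0 <= a -> 0 <= b -> 0 <= c -> 0 <= d -> a < h -> b < h -> c < h -> d < h ->
  a + b <= c' -> a + c <= c' -> a + d <= c' -> b + c <= c' -> b + d <= c' ->
  c + d <= c' -> r - 1 <= a + b + c + d -> a + b + c + d <= r ->
  2 * h <= r -> r <= 2 * h + 1 -> c' = r - h -> 10 <= r ->
  let N := a + b + c + d in
  big_pair a b N \/ big_pair a c N \/ big_pair a d N \/ big_pair b c N \/
  big_pair b d N \/ big_pair c d N \/ balanced_quad a b c d.
Proof.
rewrite /big_pair /balanced_quad => *; rewrite /=.
by have [?|?] := lerP 2 a; have [?|?] := lerP 2 b; have [?|?] := lerP 2 c;
  have [?|?] := lerP 2 d; lia.
Qed.

Section Coordinates.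
Context {n : nat}.

Lemma exists_two_small_coords (y : pt n) i : `|y i| + 2 <= norm1 y ->
  (forall j, j != i -> `|y j| <= 1) ->
  exists j1 j2 : 'I_n, [/\ j1 != i, j2 != i, (j1 < j2)%N, y j1 != 0 & y j2 != 0].
Proof.
move=> big small.
have [j1 [j1i yj1]] : exists j1, j1 != i /\ y j1 != 0.
  apply: contrapT => none; suff : norm1 y = `|y i| by lia.
  rewrite /norm1 (bigD1 i) //= big1 ?addr0 // => j ji.
  by have [->|yj] := eqVneq (y j) 0; [rewrite normr0 | case: none; exists j].
have [j2 [j2i j21 yj2]] : exists j2, [/\ j2 != i, j2 != j1 & y j2 != 0].
  apply: contrapT => none; have := small j1 j1i.
  suff : norm1 y = `|y i| + `|y j1| by lia.
  rewrite /norm1 (bigD1 i) //= (bigD1 j1) /= ?j1i // big1 ?addr0 // => j /andP[ji jj1].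
  by have [->|yj] := eqVneq (y j) 0; [rewrite normr0 | case: none; exists j].
case: (ltngtP j1 j2) => [lt12|lt21|/val_inj e12]; last by rewrite e12 eqxx in j21.
- by exists j1, j2.
- by exists j2, j1.
Qed.

Lemma sum4_single_peak (f : 'I_n -> int) p i j k l : uniq [:: i; j; k; l] ->
  (forall t, t != p -> f t <= 1) -> 1 <= f p -> f i + f j + f k + f l <= f p + 3.
Proof.
rewrite /= !inE !negb_or => /and4P[/and3P[ij ik il] /andP[jk jl] kl _] small fp.
have [ip|ip] := eqVneq i p.
  subst p; have := small j; have := small k; have := small l.
  by rewrite !(eq_sym _ i) ij ik il; lia.
have [jp|jp] := eqVneq j p.
  subst p; have := small i ip; have := small k; have := small l.
  by rewrite !(eq_sym _ j) jk jl; lia.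
have [kp|kp] := eqVneq k p.
  subst p; have := small i ip; have := small j jp; have := small l.
  by rewrite !(eq_sym _ k) kl; lia.
have := small i ip; have := small j jp; have := small k kp.
by have [lp|/small] := eqVneq l p; [subst p | ]; lia.
Qed.

End Coordinates.

Section Reduction.
Variables m n alpha r : nat.
Hypothesis r_ge10 : (10 <= r)%N.
Local Notation vertex := (Gamma_vertex m n alpha r).
Local Notation good := (good_vertex n r).
Local Notation h := ((r %/ 2)%N%:Z).
Local Notation c := (((r + 1) %/ 2)%N%:Z).
Implicit Types (S : seq 'I_n) (x y z w : pt n).

Lemma half_bounds : [/\ 2 * h <= r%:Z, r%:Z <= 2 * h + 1, c = r%:Z - h & 10 <= r%:Z].
Proof. by split; lia. Qed.

(* The non-good vertices that are not reducible; a second retraction handles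
   them. *)
Definition exceptional y := odd r /\
  exists p, [/\ `|y p| = h, forall j, j != p -> `|y j| <= 1 & norm1 y = r%:Z].

Definition reducible y := exists w,
  [/\ vertex w, norm1 w < norm1 y & dominates m n alpha r (fun=> True) w y].

Lemma reducible_shrink S y : vertex y -> S != [::] -> {in S, forall i, y i != 0} ->
  {in S, forall i : 'I_n, (forall j : 'I_n, (i < j)%N -> y j = 0) -> 2 <= `|y i|} ->
  (forall z, norm1 z <= r%:Z -> manhattan z y <= r%:Z ->
     manhattan z (shrink S y) <= r%:Z) ->
  reducible y.
Proof.
move=> yv S0 nz big_leading near.
have [wv lt_norm] := shrink_vertex yv S0 nz big_leading.
by exists (shrink S y); split=> // z /and3P[_ _ zr] _; exact: near.
Qed.

Lemma reducible_pair y p q : vertex y -> p != q -> 2 <= `|y p| -> 2 <= `|y q| ->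
  norm1 y + 2 <= 2 * (`|y p| + `|y q|) -> reducible y.
Proof.
move=> yv pq yp yq big_pq; have nz t : 2 <= `|y t| -> y t != 0.
  by apply: contraTneq => ->; rewrite normr0.
apply: (reducible_shrink [:: p; q]) => // [t|t|z zr zyr].
- by rewrite !inE => /orP[] /eqP ->; exact: nz.
- by rewrite !inE => /orP[] /eqP ->.
- exact: manhattan_shrink2 zr zyr p q pq (nz _ yp) (nz _ yq) big_pq.
Qed.

Lemma odd_of_half_bound : r%:Z = 2 * h + 1 -> odd r.
Proof.
move=> e; have : (r %% 2 = 1)%N by lia.
by rewrite modn2; case: (odd r).
Qed.

Lemma reducible_large_coord y i : vertex y -> ~ exceptional y -> h <= `|y i| ->
  reducible y.
Proof.
move=> yv not_exc big_i; have [? ? ? ?] := half_bounds.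
have yr : norm1 y <= r%:Z by case/and3P: yv.
have yi0 : y i != 0 by apply: contraTneq big_i => ->; rewrite normr0; lia.
have [single|not_single] := lerP (norm1 y + 1) (2 * `|y i|).
  apply: (reducible_shrink [:: i]) => // [t|t|z zr zyr].
  - by rewrite inE => /eqP ->.
  - by rewrite inE => /eqP -> _; lia.
  - exact: manhattan_shrink1 zr zyr i yi0 single.
have [[j [ji big_j]]|no_big] := pselect (exists j, j != i /\ 2 <= `|y j|).
  by apply: (reducible_pair _ i j yv); [rewrite eq_sym | lia | | lia].
have small j : j != i -> `|y j| <= 1.
  by move=> ji; rewrite leNgt; apply/negP => lt1; apply: no_big; exists j.
have N_eq : norm1 y = 2 * `|y i|.
  apply: contrapT => ne; apply: not_exc; split; first by apply: odd_of_half_bound; lia.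
  by exists i; split=> //; lia.
have big2 : `|y i| + 2 <= norm1 y by lia.
have [j1 [j2 [j1i j2i lt12 yj1 yj2]]] := exists_two_small_coords _ _ big2 small.
apply: (reducible_shrink [:: i; j1]) => // [t|t|z zr zyr].
- by rewrite !inE => /orP[] /eqP ->.
- rewrite !inE => /orP[] /eqP -> leading; first lia.
  by rewrite leading in yj2.
- apply: (manhattan_shrink2 zr zyr i j1 _ yi0 yj1); first by rewrite eq_sym.
  have : 0 < `|y j1| by rewrite normr_gt0.
  lia.
Qed.

Lemma reducible_large_pair y j k : vertex y -> (forall i, `|y i| < h) -> j != k ->
  c < `|y j| + `|y k| -> reducible y.
Proof.
move=> yv small jk big; have [? ? ? ?] := half_bounds.
have yr : norm1 y <= r%:Z by case/and3P: yv.
by have := small j; have := small k => ? ?; apply: (reducible_pair _ j k yv jk); lia.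
Qed.

Lemma reducible_four_support y i j k l : vertex y -> (forall i, `|y i| < h) ->
  (forall j k, j != k -> `|y j| + `|y k| <= c) -> uniq [:: i; j; k; l] ->
  r%:Z - 1 <= `|y i| + `|y j| + `|y k| + `|y l| ->
  (forall s, s \notin [:: i; j; k; l] -> y s = 0) -> reducible y.
Proof.
move=> yv small pairs u big supp; have [h_lo h_hi c_eq r10] := half_bounds.
move: (u); rewrite /= !inE !negb_or => /and4P[/and3P[ij ik il] /andP[jk jl] kl _].
have N_eq : norm1 y = `|y i| + `|y j| + `|y k| + `|y l|.
  have off0 : \sum_(s | s \notin [:: i; j; k; l]) `|y s| = 0.
    by rewrite big1 // => s /supp ->; rewrite normr0.
  by rewrite /norm1 (big_split_seq _ _ u) off0 !big_cons big_nil !addr0 !addrA.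
have N_le : `|y i| + `|y j| + `|y k| + `|y l| <= r%:Z.
  by rewrite -N_eq; case/and3P: yv.
have nz t : 2 <= `|y t| -> y t != 0 by apply: contraTneq => ->; rewrite normr0.
have := four_coords_arith (normr_ge0 (y i)) (normr_ge0 (y j)) (normr_ge0 (y k))
  (normr_ge0 (y l)) (small i) (small j) (small k) (small l) (pairs _ _ ij)
  (pairs _ _ ik) (pairs _ _ il) (pairs _ _ jk) (pairs _ _ jl) (pairs _ _ kl) big
  N_le h_lo h_hi c_eq r10.
rewrite /= -N_eq /big_pair /balanced_quad /= => -[|[|[|[|[|[|]]]]]].
- by move=> [? [? ?]]; exact: (reducible_pair _ i j).
- by move=> [? [? ?]]; exact: (reducible_pair _ i k).
- by move=> [? [? ?]]; exact: (reducible_pair _ i l).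
- by move=> [? [? ?]]; exact: (reducible_pair _ j k).
- by move=> [? [? ?]]; exact: (reducible_pair _ j l).
- by move=> [? [? ?]]; exact: (reducible_pair _ k l).
move=> [yi [yj [yk [yl [N4 [si [sj [sk sl]]]]]]]].
apply: (reducible_shrink [:: i; j; k; l]) => // [t|t|z zr zyr].
- by rewrite !inE => /or4P[] /eqP ->; exact: nz.
- by rewrite !inE => /or4P[] /eqP ->.
- apply: (manhattan_shrink4 zr zyr i j k l u (nz _ yi) (nz _ yj) (nz _ yk)
    (nz _ yl) supp); by rewrite N_eq.
Qed.

Lemma reducible_not_good y : vertex y -> ~ good y -> ~ exceptional y -> reducible y.
Proof.
move=> yv not_good not_exc.
have [small|] := pselect (forall i, `|y i| < h); last first.
  by move=> /existsNP[i /negP]; rewrite -leNgt; exact: reducible_large_coord.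
have [pairs|] := pselect (forall j k : 'I_n, j != k -> `|y j| + `|y k| <= c);
    last first.
  move=> /existsNP[j /existsNP[k /not_implyP[jk /negP]]]; rewrite -ltNge.
  exact: reducible_large_pair.
apply: contrapT => irreducible; apply: not_good.
split=> // -[i [j [k [l [u big supp]]]]].
by apply: irreducible; exact: reducible_four_support u big supp.
Qed.

Lemma exceptional_shift y : vertex y -> exceptional y -> exists w,
  [/\ vertex w, good w &
      dominates m n alpha r (fun z => good z \/ exceptional z) w y].
Proof.
move=> yv [r_odd [p [yp small yr]]]; have [h_lo h_hi c_eq r10] := half_bounds.
have r_mod : (r %% 2 = 1)%N by rewrite modn2 r_odd.
have r_eq : r%:Z = 2 * h + 1 by lia.
have yp0 : y p != 0 by apply/eqP => y0; move: yp; rewrite y0 normr0; lia.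
set w := shrink [:: p] y.
have [wv _] : vertex w /\ norm1 w < norm1 y.
  apply: shrink_vertex => // t; rewrite inE => /eqP -> //.
  by move=> _; lia.
have wp : `|w p| = h - 1 by rewrite shrink_in ?mem_head // abs_step_toward0 // yp.
have w_small t : t != p -> `|w t| <= 1.
  by move=> tp; rewrite shrink_out ?inE //; exact: small.
exists w; split=> //.
  split=> [t|j k jk|[i [j [k [l [u big _]]]]]].
  - by have [->|/w_small] := eqVneq t p; [rewrite wp|]; lia.
  - move: jk; have [->|/w_small] := eqVneq j p; have [->|/w_small] := eqVneq k p;
      rewrite ?eqxx //; lia.
  - have := sum4_single_peak (fun t => `|w t|) _ _ _ _ _ u w_small; rewrite /= wp; lia.
move=> z /and3P[_ _ zr] z_good_or_exc zyr.
rewrite /w; apply: (manhattan_shrink_far zr zyr p yp0) => far.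
case: z_good_or_exc => [[z_small _ _]|[_ [q [zq _ zr']]]].
  by have := z_small p; lia.
have [k k_eq] := manhattan_parity z y.
have : manhattan z y != r%:Z by apply/eqP => e; rewrite e zr' yr in k_eq; lia.
lia.
Qed.

End Reduction.
Arguments reducible_not_good {m n alpha r} r_ge10 {y}.
Arguments exceptional_shift {m n alpha r} r_ge10 {y}.

Section Retraction.
Variables m n alpha r : nat.
Hypothesis r_ge10 : (10 <= r)%N.
Local Notation Gamma := (Gamma m n alpha r).
Local Notation vertex := (Gamma_vertex m n alpha r).
Local Notation dominates := (dominates m n alpha r).
Local Notation good := (good_vertex n r).
Local Notation exceptional := (exceptional n r).
Implicit Types (y w : pt n).

Definition first_retraction_spec y w :=
  [/\ vertex w, good w \/ exceptional w, dominates (fun=> True) w y &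
      (good y -> w = y)].

Definition second_retraction_spec y w :=
  [/\ vertex w, good w, dominates (fun z => good z \/ exceptional z) w y &
      (good y -> w = y)].

Lemma good_not_exceptional y : good y -> ~ exceptional y.
Proof. by move=> [small _ _] [_ [p [yp _ _]]]; have := small p; rewrite yp ltxx. Qed.

Lemma exists_first_retraction y : vertex y -> exists w, first_retraction_spec y w.
Proof.
have [k] := ubnP `|norm1 y|%N; elim: k y => // k IH y lt_yk yv.
have dom_refl U : dominates U y y by [].
have [good_y|not_good] := pselect (good y); first by exists y; split; auto.
have [exc_y|not_exc] := pselect (exceptional y); first by exists y; split; auto.
have [w' [w'v lt_w' dom_w']] := reducible_not_good r_ge10 yv not_good not_exc.
have lt_w'k : (`|norm1 w'| < k)%N.
  by have := norm1_ge0 w'; have := norm1_ge0 y; lia.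
have [w [wv w_ok dom_w _]] := IH w' lt_w'k w'v.
by exists w; split=> //; exact: dominates_trans dom_w dom_w'.
Qed.

Lemma exists_second_retraction y : vertex y -> good y \/ exceptional y ->
  exists w, second_retraction_spec y w.
Proof.
move=> yv [good_y|exc_y]; first by exists y; split.
have [w [wv good_w dom_w]] := exceptional_shift r_ge10 yv exc_y.
by exists w; split=> // /good_not_exceptional.
Qed.

Definition first_retraction y := xget y (first_retraction_spec y).
Definition second_retraction y := xget y (second_retraction_spec y).

Lemma first_retractionP y : vertex y -> first_retraction_spec y (first_retraction y).
Proof. by move=> yv; apply: xgetPex; exact: exists_first_retraction. Qed.

Lemma second_retractionP y : vertex y -> good y \/ exceptional y ->
  second_retraction_spec y (second_retraction y).
Proof. by move=> yv yU; apply: xgetPex; exact: exists_second_retraction. Qed.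

Lemma Gamma_first_retraction s : Gamma s -> Gamma (s ++ map first_retraction s).
Proof.
move=> Ks; apply: (Gamma_cat_map (fun=> True)) => // y yv _.
by have [] := first_retractionP _ yv.
Qed.

Lemma Gamma_second_retraction s : Gamma s ->
  Gamma (map first_retraction s ++ map second_retraction (map first_retraction s)).
Proof.
move=> Ks; apply: (Gamma_cat_map (fun z => good z \/ exceptional z)).
- by move=> y yv yU; have [] := second_retractionP _ yv yU; split=> //; left.
- by apply: (Gamma_sub (Gamma_first_retraction _ Ks)) => x; rewrite mem_cat orbC => ->.
- move: Ks => /GammaP[_ sv _] _ /mapP[y ys ->].
  by have [] := first_retractionP _ (sv y ys).
Qed.

End Retraction.
Arguments first_retractionP {m n alpha r} r_ge10 {y}.
Arguments second_retractionP {m n alpha r} r_ge10 {y}.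

Theorem lemma3p11 (R : realType) (m n r alpha : nat) :
  (1 <= m)%N -> (5 <= n)%N -> (n <= r)%N -> (10 <= r)%N ->
  (1 <= alpha)%N -> (alpha < m.+1 ^ n)%N ->
  homotopy_equivalent R
    (geom_realization R (Gamma m n alpha r))
    (geom_realization R (induced_sub (Gamma m n alpha r) (good_vertex n r))).
Proof.
move=> _ _ _ r_ge10 _ _.
have vertexP s : Gamma m n alpha r s -> {in s, forall x, Gamma_vertex m n alpha r x}.
  by case/GammaP.
apply: (homotopy_equivalent_two_step_retraction R (undup (Yset m n alpha))
  (first_retraction m n alpha r) (second_retraction m n alpha r)).
- exact: undup_uniq.
- by move=> s /vertexP sv x /sv /and3P[xY _ _]; rewrite mem_undup.
- by move=> s s'; exact: Gamma_sub.
- exact: Gamma_first_retraction.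
- exact: Gamma_second_retraction.
- move=> s /vertexP sv v /sv vv; have [v1 v1U _ _] := first_retractionP r_ge10 vv.
  by have [] := second_retractionP r_ge10 v1 v1U.
- move=> s /vertexP sv v /sv vv good_v.
  have [_ _ _ ->] := first_retractionP r_ge10 vv => //.
  by have [_ _ _ ->] := second_retractionP r_ge10 vv (or_introl good_v).
Qed.
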